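(* Let $S$ be a semiring satisfying the standing assumptions below, and let $V$ and $W$ be finitely generated semimodules over $S$. If $T: V \to W$ is an injective linear transformation, then $T$ preserves dimension (i.e. $\dim(T(U)) = \dim(U)$ for every subsemimodule $U$ of $V$) and $T$ maps every basis of $V$ onto a basis of $T(V)$.
   Context: A semiring $(S,+,\cdot)$ here means: $(S,+)$ is a commutative monoid with zero $0$, $(S,\cdot)$ is a commutative monoid with identity $1$, multiplication distributes over addition, and $0$ is absorbing. Standing assumptions on $S$: $S$ is additively idempotent ($a+a=a$), multiplicatively cancellative (for every nonzero $a$, $ba=ca$ implies $b=c$), and additively unit irreducible (if $a+b$ is a unit then $a$ or $b$ is a unit). A semimodule over $S$ is a nonempty subset of some $M_{m\times n}(S)$ (matrices over $S$) closed under addition and scalar multiplication; a subsemimodule is a semimodule contained in another. It is finitely generated if it is the set of $S$-linear combinations of a finite subset. Linear independence: no element lies in the span of the others; a basis is a linearly independent spanning set. All bases of a finitely generated semimodule have the same finite cardinality, called its dimension $\dim$. All semimodules considered are finitely generated. A map $T:V\to W$ is a linear transformation if $T(\alpha x+\beta y)=\alpha T(x)+\beta T(y)$ for all $\alpha,\beta\in S$, $x,y\in V$. *)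

From mathcomp Require Import all_boot all_algebra.
From Stdlib Require Import ClassicalEpsilon.
Set Implicit Arguments. Unset Strict Implicit. Unset Printing Implicit Defensive.
Import GRing.Theory.
Local Open Scope ring_scope.

Section SemiringDefs.
Variable S : comPzSemiRingType.

Definition sunit (a : S) : Prop := exists b : S, a * b = 1.

Definition add_idempotent : Prop := forall a : S, a + a = a.
Definition mul_cancellative : Prop :=
  forall a b c : S, a != 0 -> b * a = c * a -> b = c.
Definition add_unit_irreducible : Prop :=
  forall a b : S, sunit (a + b) -> sunit a \/ sunit b.

Variables m n : nat.
Notation M := 'M[S]_(m, n).

Definition semimodule (V : M -> Prop) : Prop :=
  (exists x, V x) /\
  (forall x y, V x -> V y -> V (x + y)) /\
  (forall (a : S) x, V x -> V (a *: x)).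

Definition in_span (s : seq M) (x : M) : Prop :=
  exists c : 'I_(size s) -> S, x = \sum_(i < size s) c i *: nth 0 s i.

Definition spans (V : M -> Prop) (s : seq M) : Prop :=
  forall x, V x <-> in_span s x.

Definition fin_generated (V : M -> Prop) : Prop := exists s, spans V s.

Definition lin_indep (s : seq M) : Prop :=
  forall i, (i < size s)%N -> ~ in_span (take i s ++ drop i.+1 s) (nth 0 s i).

Definition is_basis (V : M -> Prop) (B : seq M) : Prop :=
  lin_indep B /\ spans V B.

(* dimension: the (common) cardinality of a basis *)
Definition sdim (V : M -> Prop) : nat :=
  epsilon (inhabits 0%N) (fun d => exists B, is_basis V B /\ size B = d).

Definition subsemimodule (U V : M -> Prop) : Prop :=
  semimodule U /\ forall x, U x -> V x.

End SemiringDefs.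

Section MapDefs.
Variable S : comPzSemiRingType.
Variables m n p q : nat.

Definition img (T : 'M[S]_(m, n) -> 'M[S]_(p, q)) (U : 'M[S]_(m, n) -> Prop)
  : 'M[S]_(p, q) -> Prop := fun y => exists2 x, U x & y = T x.

Definition linear_on (V : 'M[S]_(m, n) -> Prop) (W : 'M[S]_(p, q) -> Prop)
  (T : 'M[S]_(m, n) -> 'M[S]_(p, q)) : Prop :=
  (forall x, V x -> W (T x)) /\
  (forall (a b : S) x y, V x -> V y -> T (a *: x + b *: y) = a *: T x + b *: T y).

Definition injective_on (V : 'M[S]_(m, n) -> Prop)
  (T : 'M[S]_(m, n) -> 'M[S]_(p, q)) : Prop :=
  forall x y, V x -> V y -> T x = T y -> x = y.
End MapDefs.

(* An injective linear map T restricted to a semimodule U carries spans to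
   spans and linearly independent lists to linearly independent lists, and
   every list in T(U) lifts to a list in U.  Hence the bases of T(U) are
   exactly the images of the bases of U, so the two predicates defining
   [sdim] coincide and the choice operator returns the same value. *)
From mathcomp Require Import all_boot all_algebra.
From Stdlib Require Import ClassicalEpsilon FunctionalExtensionality PropExtensionality.
Set Implicit Arguments. Unset Strict Implicit. Unset Printing Implicit Defensive.
Import GRing.Theory.
Local Open Scope ring_scope.

Section Span.
Variable S : comPzSemiRingType.
Variables m n : nat.
Notation M := 'M[S]_(m, n).

Lemma in_spanE (s : seq M) x :
  in_span s x <-> exists f : nat -> S, x = \sum_(i < size s) f i *: nth 0 s i.
Proof.
split; last by case=> f ->; exists (fun i => f i).
case=> c ->; exists (fun j => if insub j is Some o then c o else 0).
by apply: eq_bigr => i _; rewrite valK.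
Qed.

Lemma in_span_nil x : in_span (Nil M) x <-> x = 0.
Proof.
rewrite in_spanE; split; first by case=> f ->; rewrite big_ord0.
by move=> ->; exists (fun _ => 0); rewrite big_ord0.
Qed.

Lemma in_span_cons a (s : seq M) x :
  in_span (a :: s) x <-> exists c y, in_span s y /\ x = c *: a + y.
Proof.
rewrite in_spanE; split.
- case=> f ->; rewrite /= big_ord_recl /=.
  exists (f 0%N), (\sum_(i < size s) f (bump 0 i) *: nth 0 s i); split => //.
  by apply/in_spanE; exists (fun i => f i.+1).
- case=> c [y [/in_spanE [f ->] ->]].
  by exists (fun i => if i is j.+1 then f j else c); rewrite /= big_ord_recl.
Qed.

Lemma in_span0 (s : seq M) : in_span s 0.
Proof.
by apply/in_spanE; exists (fun _ => 0); rewrite big1 // => i _; rewrite scale0r.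
Qed.

Lemma mem_in_span (s : seq M) a : a \in s -> in_span s a.
Proof.
elim: s => // b s IH; rewrite inE => /orP [/eqP ->|ha]; apply/in_span_cons.
- by exists 1, 0; split; [apply: in_span0 | rewrite scale1r addr0].
- by exists 0, a; split; [apply: IH | rewrite scale0r add0r].
Qed.

Lemma mem_take_drop (s : seq M) i a :
  a \in take i s ++ drop i.+1 s -> a \in s.
Proof. by rewrite mem_cat => /orP [/mem_take | /mem_drop]. Qed.

End Span.

Section Semimodule.
Variable S : comPzSemiRingType.
Variables m n : nat.
Notation M := 'M[S]_(m, n).
Variable U : M -> Prop.
Hypothesis hU : semimodule U.

Lemma semimodule0 : U 0.
Proof. by case: hU => [[x Ux] [_ hsc]]; rewrite -(scale0r x); apply: hsc. Qed.

Lemma in_span_closed (s : seq M) x :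
  (forall a, a \in s -> U a) -> in_span s x -> U x.
Proof.
case: hU => [_ [hadd hsc]].
elim: s x => [|a s IH] x hs; first by move/in_span_nil => ->; apply: semimodule0.
case/in_span_cons => c [y [hy ->]]; apply: hadd.
- by apply/hsc/hs; rewrite inE eqxx.
- by apply: IH hy => b hb; apply: hs; rewrite inE hb orbT.
Qed.

Lemma basis_mem (s : seq M) : is_basis U s -> forall a, a \in s -> U a.
Proof. by case=> _ hsp a /mem_in_span /hsp. Qed.

End Semimodule.

Section InjectiveLinear.
Variable S : comPzSemiRingType.
Variables m n p q : nat.
Notation M := 'M[S]_(m, n).
Variable U : M -> Prop.
Hypothesis hU : semimodule U.
Variable T : M -> 'M[S]_(p, q).
Hypothesis lin :
  forall (a b : S) x y, U x -> U y -> T (a *: x + b *: y) = a *: T x + b *: T y.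
Hypothesis inj : forall x y, U x -> U y -> T x = T y -> x = y.

Lemma linear_on0 : T 0 = 0.
Proof.
by move: (lin 0 0 (semimodule0 hU) (semimodule0 hU)); rewrite !scale0r !addr0.
Qed.

Lemma linear_onD x y : U x -> U y -> T (x + y) = T x + T y.
Proof. by move=> Ux Uy; rewrite -(scale1r x) -(scale1r y) lin // !scale1r. Qed.

Lemma linear_onZ c x : U x -> T (c *: x) = c *: T x.
Proof.
move=> Ux; have U0 := semimodule0 hU.
by rewrite -[c *: x]addr0 -(scale0r 0) lin // linear_on0 scale0r !addr0.
Qed.

Lemma in_span_map (s : seq M) y : (forall a, a \in s -> U a) ->
  in_span (map T s) y <-> exists2 x, in_span s x & y = T x.
Proof.
elim: s y => [|a s IH] y hs /=.
  rewrite in_span_nil; split=> [-> | [x /in_span_nil -> ->]]; last exact: linear_on0.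
  by exists 0; [apply/in_span_nil | rewrite linear_on0].
have hs' b : b \in s -> U b by move=> hb; apply: hs; rewrite inE hb orbT.
have Ua : U a by apply: hs; rewrite inE eqxx.
have [_ [_ hsc]] := hU.
rewrite in_span_cons; split.
- case=> c [y' [/(IH _ hs') [x' hx' ->] ->]].
  exists (c *: a + x'); first by apply/in_span_cons; exists c, x'.
  by rewrite linear_onD ?linear_onZ //; [apply: hsc | apply: in_span_closed hx'].
- case=> x /in_span_cons [c [x' [hx' ->]] ->].
  exists c, (T x'); split; first by apply/IH => //; exists x'.
  by rewrite linear_onD ?linear_onZ //; [apply: hsc | apply: in_span_closed hx'].
Qed.

Lemma lin_indep_map (s : seq M) : (forall a, a \in s -> U a) ->
  lin_indep (map T s) <-> lin_indep s.
Proof.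
move=> hs; have hr i a : a \in take i s ++ drop i.+1 s -> U a.
  by move/mem_take_drop; apply: hs.
have map_nth i : (i < size s)%N ->
    map T (take i s ++ drop i.+1 s) = take i (map T s) ++ drop i.+1 (map T s)
    /\ nth 0 (map T s) i = T (nth 0 s i).
  by move=> hi; rewrite map_cat map_take map_drop (nth_map 0 0).
split=> hind i hi.
- move=> hx; apply: (hind i); first by rewrite size_map.
  have [<- ->] := map_nth i hi.
  by apply/(in_span_map _ (hr i)); exists (nth 0 s i).
- rewrite size_map in hi; have [<- ->] := map_nth i hi.
  case/(in_span_map _ (hr i)) => x hx hTx; apply: (hind i hi).
  suff -> : nth 0 s i = x by [].
  apply: inj hTx; first exact/hs/mem_nth.
  exact: (in_span_closed hU (hr i) hx).
Qed.

Lemma spans_map (s : seq M) : (forall a, a \in s -> U a) ->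
  spans (img T U) (map T s) <-> spans U s.
Proof.
move=> hs; split=> hsp x.
- split; last exact: in_span_closed.
  move=> Ux; have /hsp/(in_span_map _ hs) [x' hx' hTx] : img T U (T x) by exists x.
  by rewrite (inj Ux _ hTx) //; apply: in_span_closed hx'.
- rewrite in_span_map //; split.
  + by case=> x' /hsp hx' ->; exists x'.
  + by case=> x' /hsp hx' ->; exists x'.
Qed.

Lemma is_basis_map (s : seq M) : (forall a, a \in s -> U a) ->
  is_basis (img T U) (map T s) <-> is_basis U s.
Proof. by move=> hs; rewrite /is_basis lin_indep_map // spans_map. Qed.

Lemma img_seq_lift (B : seq 'M[S]_(p, q)) : (forall b, b \in B -> img T U b) ->
  exists2 s : seq M, (forall a, a \in s -> U a) & B = map T s.
Proof.
elim: B => [|b B IH] hB; first by exists [::].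
have [x Ux ->] : img T U b by apply: hB; rewrite inE eqxx.
have [s hs ->] : exists2 s : seq M, (forall a, a \in s -> U a) & B = map T s.
  by apply: IH => c hc; apply: hB; rewrite inE hc orbT.
by exists (x :: s) => // a; rewrite inE => /orP [/eqP ->|]; last apply: hs.
Qed.

Lemma basis_sizes_img d :
  (exists B, is_basis (img T U) B /\ size B = d) <->
  (exists B, is_basis U B /\ size B = d).
Proof.
split; case=> B [hB <-].
- have [s hs eB] := img_seq_lift (basis_mem hB); subst B.
  by exists s; rewrite size_map -is_basis_map.
- exists (map T B); rewrite size_map is_basis_map //.
  exact: basis_mem hB.
Qed.

Lemma sdim_img : sdim (img T U) = sdim U.
Proof.
rewrite /sdim; congr (epsilon _ _).
by apply: functional_extensionality => d; apply: propositional_extensionality;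
  apply: basis_sizes_img.
Qed.

End InjectiveLinear.

Theorem lemma2p7 (S : comPzSemiRingType)
  (hidem : add_idempotent S) (hcanc : mul_cancellative S)
  (hirr : add_unit_irreducible S)
  (m n p q : nat) (V : 'M[S]_(m, n) -> Prop) (W : 'M[S]_(p, q) -> Prop)
  (hV : semimodule V) (hVfg : fin_generated V)
  (hW : semimodule W) (hWfg : fin_generated W)
  (T : 'M[S]_(m, n) -> 'M[S]_(p, q))
  (hT : linear_on V W T) (hinj : injective_on V T) :
  (forall U : 'M[S]_(m, n) -> Prop,
      subsemimodule U V -> fin_generated U -> sdim (img T U) = sdim U) /\
  (forall B : seq 'M[S]_(m, n), is_basis V B -> is_basis (img T V) (map T B)).
Proof.
have [_ hlin] := hT.
split=> [U [hU hUV] _ | B hB].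
- apply: sdim_img => //.
  + by move=> a b x y /hUV hx /hUV hy; apply: hlin.
  + by move=> x y /hUV hx /hUV hy; apply: hinj.
- by apply/is_basis_map => //; exact: basis_mem hB.
Qed.
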